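(* Let $n\in\mathbb{N}$, $a<b$, and let $f:[a,b]\to\mathbb{R}$ be $(2n-1)$-convex. If $x_1=a$, $x_2,\dots,x_n\in(a,b)$ and $x_{n+1}=b$, then there exists a polynomial $p\in\Pi_{2n-1}$ such that $p(x_i)=f(x_i)$ for $i=1,\dots,n+1$ and $p(x)\ge f(x)$ for all $x\in[a,b]$.
   Context: $\Pi_m$ denotes the set of real polynomials of degree at most $m$. Divided differences are defined recursively by $[x_1;f]:=f(x_1)$ and $[x_1,\dots,x_{m+1};f]:=\frac{[x_2,\dots,x_{m+1};f]-[x_1,\dots,x_m;f]}{x_{m+1}-x_1}$ for pairwise distinct points. For $m\in\mathbb{N}$, a function $f$ on an interval $I$ is called $m$-convex if $[x_1,\dots,x_{m+2};f]\ge 0$ for all pairwise distinct $x_1,\dots,x_{m+2}\in I$. *)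

From HB Require Import structures.
From mathcomp Require Import all_boot all_order all_algebra.
From mathcomp Require Import reals.
Set Implicit Arguments. Unset Strict Implicit. Unset Printing Implicit Defensive.
Import Order.TTheory GRing.Theory Num.Theory.
Local Open Scope ring_scope.

(* Divided difference of f on the points s = [:: x_1; ...; x_(k+1)], computed
   recursively following
   [x_1;f] = f x_1,
   [x_1,...,x_(k+1);f] = ([x_2,...,x_(k+1);f] - [x_1,...,x_k;f]) / (x_(k+1) - x_1). *)
Fixpoint dd_aux {R : fieldType} (f : R -> R) (k : nat) (s : seq R) : R :=
  match k with
  | 0%N => f (head 0 s)
  | k'.+1 => (dd_aux f k' (behead s) - dd_aux f k' (take k'.+1 s))
             / (nth 0 s k'.+1 - nth 0 s 0)
  end.

Definition divdiff {R : fieldType} (f : R -> R) (s : seq R) : R :=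
  dd_aux f (size s).-1 s.

Definition mconvex_on {R : realFieldType} (m : nat) (a b : R) (f : R -> R) : Prop :=
  forall s : seq R, size s = (m + 2)%N -> uniq s ->
    all (fun x => (a <= x) && (x <= b)) s -> 0 <= divdiff f s.

(* Put N = [a, b, z_1, ..., z_(n-1)] with the z_j distinct interior points containing
   the x_i. If L interpolates f on N and w_N is the nodal polynomial of N, then
   f = L + w_N F with F y = [N, y; f], and every divided difference of F on n points
   is a divided difference of f on 2n + 1 points, hence nonnegative. By induction on
   the z_j one finds a polynomial r of degree < n - 1 with (F - r) w_Z >= 0 off the
   nodes: a suitable value c = F(z) is obtained as a supremum of interpolants, and one
   recurses on (F y - c) / (y - z). Then p = L + w_N r interpolates f on N and
   f - p = (F - r) w_Z (y - a) (y - b) <= 0 on [a, b]. *)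

From HB Require Import structures.
From mathcomp Require Import all_boot all_order all_algebra.
From mathcomp Require Import reals classical_sets.
From mathcomp Require Import ring lra zify polyrcf.
Import Order.TTheory GRing.Theory Num.Theory.
Set Implicit Arguments. Unset Strict Implicit. Unset Printing Implicit Defensive.
Local Open Scope ring_scope.

Section LagrangeInterpolation.
Variable R : fieldType.
Implicit Types (f g : R -> R) (s t : seq R) (u v w x : R).

Definition node_denom s x := \prod_(y <- s | y != x) (x - y).
Definition lagrange_sum f s := \sum_(x <- s) f x / node_denom s x.
Definition nodal s : {poly R} := \prod_(y <- s) ('X - y%:P).
Definition lagrange_poly f s : {poly R} :=
  \sum_(x <- s) (f x / node_denom s x) *: \prod_(y <- s | y != x) ('X - y%:P).

Lemma node_denom_cons y s x :
  node_denom (y :: s) x = if y != x then (x - y) * node_denom s x else node_denom s x.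
Proof. by rewrite /node_denom big_cons. Qed.

Lemma node_denom_rcons s y x :
  node_denom (rcons s y) x = if y != x then node_denom s x * (x - y) else node_denom s x.
Proof. by rewrite /node_denom big_rcons /=; case: (y != x); rewrite ?mulr1. Qed.

Lemma node_denom_neq0 s x : node_denom s x != 0.
Proof.
rewrite /node_denom prodf_seq_neq0; apply/allP => y _.
by apply/implyP; rewrite subr_eq0 eq_sym.
Qed.

Lemma divdiff_seq1 f x : divdiff f [:: x] = f x.
Proof. by []. Qed.

Lemma divdiff_cons_rcons f u s v :
  divdiff f (u :: rcons s v) = (divdiff f (rcons s v) - divdiff f (u :: s)) / (v - u).
Proof.
rewrite /divdiff /= size_rcons /=.
have -> : take (size s) (rcons s v) = s by rewrite -cats1 take_size_cat.
by rewrite nth_rcons ltnn eqxx.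
Qed.

Lemma lagrange_sum_cons_rcons f u s v : uniq (u :: rcons s v) ->
  lagrange_sum f (u :: rcons s v)
  = (lagrange_sum f (rcons s v) - lagrange_sum f (u :: s)) / (v - u).
Proof.
rewrite /= rcons_uniq mem_rcons inE negb_or => /andP[/andP[uv us] /andP[vs _]].
have vu : v - u != 0 by rewrite subr_eq0 eq_sym.
rewrite /lagrange_sum !big_cons !big_rcons /= !node_denom_cons !node_denom_rcons.
rewrite eqxx (negbTE uv) eq_sym uv /= eqxx.
set S := \sum_(x <- s) _; set Sv := \sum_(x <- s) _; set Su := \sum_(x <- s) _.
have -> : S = (Sv - Su) / (v - u).
  rewrite /S /Sv /Su -sumrB mulr_suml; apply: eq_big_seq => x xs.
  have xu : x != u by apply: contraNneq us => <-.
  have xv : x != v by apply: contraNneq vs => <-.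
  rewrite !node_denom_cons !node_denom_rcons (eq_sym u) (eq_sym v) xu xv.
  have := node_denom_neq0 s x; set P := node_denom s x => P0.
  have xu0 : x - u != 0 by rewrite subr_eq0.
  have xv0 : x - v != 0 by rewrite subr_eq0.
  by field; rewrite P0 xu0 xv0 vu.
have := node_denom_neq0 s u; have := node_denom_neq0 s v.
set A := node_denom s u; set B := node_denom s v => B0 A0.
have uv0 : u - v != 0 by rewrite subr_eq0.
by field; rewrite A0 B0 vu uv0.
Qed.

(* Both sides satisfy the same recursion, peeling off the first and last node. *)
Lemma divdiff_lagrange_sum f s : uniq s -> s != [::] -> divdiff f s = lagrange_sum f s.
Proof.
move: {2}(size s) (leqnn (size s)) => k; elim: k s => [|k IH] s; first by case: s.
case: s => [//|u s]; case/lastP: s => [|s v] ss us _.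
  by rewrite /lagrange_sum /node_denom !big_cons !big_nil eqxx divr1 addr0.
move: ss; rewrite /= size_rcons ltnS => ss.
move: (us); rewrite /= rcons_uniq mem_rcons inE negb_or => /andP[/andP[_ su] /andP[vs s_uniq]].
rewrite divdiff_cons_rcons lagrange_sum_cons_rcons // !IH //.
- by rewrite /= su s_uniq.
- by rewrite size_rcons.
- by rewrite rcons_uniq vs s_uniq.
- by case: (s).
Qed.

Lemma divdiff_perm f s t : uniq s -> perm_eq s t -> divdiff f s = divdiff f t.
Proof.
move=> us pst; have ut : uniq t by rewrite -(perm_uniq pst).
case: s us pst => [|u s] us pst; first by case: t ut pst => // x t _ /perm_size.
have t0 : t != [::] by case: t pst ut => // /perm_size.
rewrite !divdiff_lagrange_sum // /lagrange_sum (perm_big _ pst); apply: eq_bigr => x _.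
by rewrite /node_denom (perm_big _ pst).
Qed.

Lemma eq_divdiff f g s : uniq s -> s != [::] -> {in s, f =1 g} -> divdiff f s = divdiff g s.
Proof.
move=> us s0 fg; rewrite !divdiff_lagrange_sum //.
by apply: eq_big_seq => x xs; rewrite fg.
Qed.

Lemma divdiff_divdiff_rcons f s t : uniq (s ++ t) -> t != [::] ->
  divdiff (fun x => divdiff f (rcons s x)) t = divdiff f (s ++ t).
Proof.
have perm_mid u t' : perm_eq (s ++ u :: t') (u :: s ++ t') by rewrite -cat1s perm_catCA.
move: {2}(size t) (leqnn (size t)) => k; elim: k t => [|k IH] t; first by case: t.
case: t => [//|u t]; case/lastP: t => [|t v] tk ust _; first by rewrite cats1.
move: tk; rewrite /= size_rcons ltnS => tk.
have ust' : uniq (u :: rcons (s ++ t) v).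
  by rewrite rcons_cat -(perm_uniq (perm_mid u _)).
have usut : uniq (s ++ u :: t).
  by move: ust; rewrite -cats1 -cat_cons catA cat_uniq => /andP[].
rewrite divdiff_cons_rcons !IH //; first last.
- by case: (t).
- by move: ust; rewrite (perm_uniq (perm_mid u _)) => /andP[].
- by rewrite size_rcons.
rewrite (divdiff_perm f ust (perm_mid u _)) -rcons_cat divdiff_cons_rcons rcons_cat.
by congr ((_ - _) / _); apply: divdiff_perm; rewrite ?perm_mid.
Qed.

Lemma horner_nodal s w : (nodal s).[w] = \prod_(y <- s) (w - y).
Proof. by rewrite /nodal horner_prod; apply: eq_bigr => y _; rewrite hornerXsubC. Qed.

Lemma nodal_cons y s : nodal (y :: s) = ('X - y%:P) * nodal s.
Proof. by rewrite /nodal big_cons. Qed.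

Lemma size_nodal s : size (nodal s) = (size s).+1.
Proof. by rewrite /nodal size_prod_XsubC. Qed.

Lemma root_nodal s w : root (nodal s) w = (w \in s).
Proof. exact: root_prod_XsubC. Qed.

Lemma horner_lagrange_poly f s w : (lagrange_poly f s).[w]
  = \sum_(x <- s) f x / node_denom s x * \prod_(y <- s | y != x) (w - y).
Proof.
rewrite /lagrange_poly horner_sum; apply: eq_bigr => x _; rewrite hornerZ horner_prod.
by congr (_ * _); apply: eq_bigr => y _; rewrite hornerXsubC.
Qed.

Lemma eq_lagrange_poly f g s : {in s, f =1 g} -> lagrange_poly f s = lagrange_poly g s.
Proof. by move=> fg; apply: eq_big_seq => x xs; rewrite fg. Qed.

Lemma lagrange_poly_node f s w : uniq s -> w \in s -> (lagrange_poly f s).[w] = f w.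
Proof.
move=> us ws; rewrite horner_lagrange_poly (bigD1_seq w) //= divfK ?node_denom_neq0 //.
rewrite big1 ?addr0 // => x xw; apply/eqP; rewrite mulf_eq0; apply/orP; right.
apply/negPn; rewrite prodf_seq_neq0; apply/allPn; exists w => //.
by rewrite eq_sym xw subrr eqxx.
Qed.

Lemma size_lagrange_poly f s : (size (lagrange_poly f s) <= size s)%N.
Proof.
rewrite (leq_trans (size_sum _ _ _)) //; apply/bigmax_leqP_seq => x xs _.
rewrite (leq_trans (size_scale_leq _ _)) // -big_filter size_prod_XsubC size_filter.
rewrite -(count_predC (fun y => y != x) s) -addn1 leq_add2l -has_count.
by apply/hasP; exists x => //=; rewrite eqxx.
Qed.

Lemma lagrange_poly_error f s w : uniq s -> w \notin s ->
  divdiff f (rcons s w) * (nodal s).[w] = f w - (lagrange_poly f s).[w].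
Proof.
move=> us ws; rewrite divdiff_lagrange_sum ?rcons_uniq ?ws //; last by case: (s).
have denom_w : node_denom s w = (nodal s).[w].
  rewrite horner_nodal /node_denom big_seq_cond [RHS]big_seq_cond; apply: eq_bigl => y.
  by case ys: (y \in s) => //=; apply: contraNneq ws => <-.
have nodal_w : (nodal s).[w] != 0 by rewrite -denom_w node_denom_neq0.
rewrite /lagrange_sum big_rcons /= node_denom_rcons eqxx denom_w mulrDl divfK //.
rewrite addrC horner_lagrange_poly -sumrN mulr_suml; congr (_ + _).
apply: eq_big_seq => x xs; have wx : w != x by apply: contraNneq ws => ->.
rewrite node_denom_rcons wx horner_nodal (bigD1_seq x) //=.
have := node_denom_neq0 s x; set P := node_denom s x => P0.
have xw : x - w != 0 by rewrite subr_eq0 eq_sym.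
by field; rewrite P0 xw.
Qed.

End LagrangeInterpolation.

Section NonnegDivdiff.
Variable R : realFieldType.
Implicit Types (f F : R -> R) (s E Y : seq R) (a b c z : R).

Definition punctured a b E : pred R := fun x => (a < x < b) && (x \notin E).

Definition dd_nonneg (k : nat) (D : pred R) F :=
  forall s, size s = k -> uniq s -> all D s -> 0 <= divdiff F s.

Lemma exists_gap E a b : a < b -> exists l h,
  [/\ a <= l, l < h, h <= b & {in E, forall e, ~~ (l < e < h)}].
Proof.
move=> ab; elim: E => [|e E [l [h [al lh hb gap]]]]; first by exists a, b.
have [/andP[le eh] | ele] := boolP (l < e < h).
  exists l, e; split => //; first exact: le_trans (ltW eh) hb.
  move=> e'; rewrite inE => /predU1P[-> | /gap]; first by rewrite ltxx andbF.
  by apply: contra => /andP[-> /= /lt_trans->].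
by exists l, h; split => // e'; rewrite inE => /predU1P[-> | /gap].
Qed.

Lemma exists_punctured E a b : a < b -> exists w, punctured a b E w.
Proof.
move=> /(exists_gap E) [l [h [al lh hb gap]]]; exists ((l + h) / 2).
apply/andP; split; first by apply/andP; split; lra.
apply/negP => /gap; rewrite negb_and -!leNgt => /orP[] ?; lra.
Qed.

Lemma exists_punctured_seq E a b m : a < b ->
  exists Y, [/\ size Y = m, uniq Y & all (punctured a b E) Y].
Proof.
move=> ab; elim: m => [|m [Y [sY uY DY]]]; first by exists [::].
have [w /andP[abw]] := exists_punctured (E ++ Y) ab.
rewrite mem_cat negb_or => /andP[wE wY].
by exists (w :: Y); rewrite /= sY wY uY DY /punctured abw wE.
Qed.

Lemma sub_punctured a b a' b' E E' : a <= a' -> b' <= b -> {subset E <= E'} ->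
  forall x, punctured a' b' E' x -> punctured a b E x.
Proof.
move=> aa' b'b EE' x /andP[/andP[a'x xb'] xE'].
rewrite /punctured /= (le_lt_trans aa' a'x) (lt_le_trans xb' b'b) /=.
by apply: contra xE'; apply: EE'.
Qed.

Lemma nodal_gt0 s z : all (fun y => y < z) s -> 0 < (nodal s).[z].
Proof.
by move=> /allP sz; rewrite horner_nodal big_seq prodr_gt0 // => y /sz; rewrite subr_gt0.
Qed.

Lemma exists_nodal_gt0 E a b z k : a < z -> z <= b ->
  exists Y, [/\ size Y = k, uniq Y, all (punctured a b E) Y & 0 < (nodal Y).[z]].
Proof.
move=> az zb; have [Y [kY uY /allP Yaz]] := exists_punctured_seq E k az.
exists Y; split => //; first by apply/allP => y /Yaz; apply: sub_punctured.
by apply: nodal_gt0; apply/allP => y /Yaz /andP[/andP[]].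
Qed.

Lemma exists_nodal_lt0 E a b z k : (0 < k)%N -> a < z < b ->
  exists Y, [/\ size Y = k, uniq Y, all (punctured a b E) Y & (nodal Y).[z] < 0].
Proof.
move=> k0 /andP[az zb]; have [w /andP[/andP[zw wb] wE]] := exists_punctured E zb.
have [Y [kY uY /allP DY pY]] := exists_nodal_gt0 (w :: E) k.-1 az (ltW zb).
exists (w :: Y); split.
- by rewrite /= kY prednK.
- by rewrite /= uY andbT; apply/negP => /DY /andP[_]; rewrite mem_head.
- rewrite /= /punctured /= wE wb (lt_trans az zw) /=.
  by apply/allP => y /DY; apply: sub_punctured => // e; rewrite inE orbC => ->.
- by rewrite nodal_cons hornerM hornerXsubC pmulr_llt0 ?subr_lt0.
Qed.

Lemma sub_dd_nonneg k (D1 D2 : pred R) F :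
  (forall x, D1 x -> D2 x) -> dd_nonneg k D2 F -> dd_nonneg k D1 F.
Proof. by move=> D12 HF s ks us /allP D1s; apply: HF => //; apply/allP => x /D1s/D12. Qed.

Lemma dd_nonneg_divdiff_rcons k (D : pred R) s f : (0 < k)%N -> uniq s -> all D s ->
  dd_nonneg (size s + k) D f ->
  dd_nonneg k [pred y | D y && (y \notin s)] (fun y => divdiff f (rcons s y)).
Proof.
move=> k0 us Ds Hf Y kY uY /allP DY.
have Y0 : Y != [::] by apply: contraTneq k0 => Y0; rewrite -kY Y0.
have usY : uniq (s ++ Y) by rewrite cat_uniq us uY andbT; apply/hasPn => y /DY /andP[].
rewrite divdiff_divdiff_rcons //; apply: Hf => //; first by rewrite size_cat kY.
by rewrite all_cat Ds; apply/allP => y /DY /andP[].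
Qed.

Lemma dd_nonneg_slope k (D : pred R) F z c : (0 < k)%N -> ~~ D z ->
  (forall Y, size Y = k -> uniq Y -> all D Y ->
     0 <= (c - (lagrange_poly F Y).[z]) / (nodal Y).[z]) ->
  dd_nonneg k D (fun x => (F x - c) / (x - z)).
Proof.
move=> k0 Dz Hc Y kY uY DY; have zY : z \notin Y by apply: contra Dz => /(allP DY).
have Y0 : Y != [::] by apply: contraTneq k0 => Y0; rewrite -kY Y0.
have neq_z x : x \in Y -> (x == z) = false by move=> xY; apply: contraNF zY => /eqP <-.
pose Fz x := if x == z then c else F x.
rewrite (@eq_divdiff _ _ (fun x => divdiff Fz (rcons [:: z] x))) //; last first.
  by move=> x xY; rewrite (divdiff_cons_rcons Fz z [::] x) !divdiff_seq1 /Fz eqxx neq_z.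
rewrite divdiff_divdiff_rcons /= ?zY // (@divdiff_perm _ _ _ (rcons Y z)) /= ?zY //; last first.
  by rewrite perm_sym perm_rcons.
have nodal_z : (nodal Y).[z] != 0 by rewrite -rootE root_nodal.
have := lagrange_poly_error Fz uY zY.
rewrite (@eq_lagrange_poly _ Fz F) => [|x /neq_z]; last by rewrite /Fz => ->.
by rewrite /Fz eqxx => /(canRL (mulfK nodal_z)) ->; apply: Hc.
Qed.

Lemma exists_uniq_cover (I : seq R) a b k : a < b ->
  all (fun y => a < y < b) I -> (size I <= k)%N ->
  exists Z, [/\ size Z = k, uniq Z, all (fun y => a < y < b) Z & {subset I <= Z}].
Proof.
move=> ab Iab Ik.
have [Y [sY uY /allP DY]] := exists_punctured_seq (undup I) (k - size (undup I)) ab.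
exists (undup I ++ Y); split.
- by rewrite size_cat sY subnKC // (leq_trans (size_undup _)).
- by rewrite cat_uniq undup_uniq uY andbT; apply/hasPn => y /DY /andP[].
- rewrite all_cat; apply/andP; split; apply/allP => y; last by move=> /DY /andP[].
  by rewrite mem_undup => /(allP Iab).
- by move=> y yI; rewrite mem_cat mem_undup yI.
Qed.

End NonnegDivdiff.

Section RealClosed.
Variable R : rcfType.
Implicit Types (F : R -> R) (E Y : seq R) (a b z : R).

Lemma poly_gt0_near (p : {poly R}) z : 0 < p.[z] ->
  exists2 d, 0 < d & forall w, `|w - z| < d -> 0 < p.[w].
Proof.
move=> pz; have [d d0 Hd] := poly_cont z p pz; exists d => // w /Hd.
rewrite distrC => h; have := ler_norm (p.[z] - p.[w]); lra.
Qed.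

(* Near z, where nodal Y > 0 > nodal Y', the error formula gives
   L_Y(w) <= F w <= L_Y'(w) at every admissible w; by continuity L_Y(z) <= L_Y'(z). *)
Lemma lagrange_poly_le_nodal_sign a b E F z k Y Y' : a < z < b ->
  dd_nonneg k.+1 (punctured a b E) F ->
  size Y = k -> size Y' = k -> uniq Y -> uniq Y' ->
  all (punctured a b E) Y -> all (punctured a b E) Y' ->
  0 < (nodal Y).[z] -> (nodal Y').[z] < 0 ->
  (lagrange_poly F Y).[z] <= (lagrange_poly F Y').[z].
Proof.
move=> /andP[az zb] HF kY kY' uY uY' DY DY' pY pY'.
rewrite leNgt; apply/negP => LY'Y.
have [d1 d10 H1] := poly_gt0_near pY.
have [d2 d20 H2] : exists2 d, 0 < d & forall w, `|w - z| < d -> 0 < (- nodal Y').[w].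
  by apply: poly_gt0_near; rewrite hornerN oppr_gt0.
have [d3 d30 H3] : exists2 d, 0 < d &
    forall w, `|w - z| < d -> 0 < (lagrange_poly F Y - lagrange_poly F Y').[w].
  by apply: poly_gt0_near; rewrite hornerD hornerN subr_gt0.
pose d := Order.min d1 (Order.min d2 (Order.min d3 (b - z))).
have d0 : 0 < d by rewrite !lt_min d10 d20 d30 subr_gt0 zb.
have [w /andP[/andP[zw wd] wE]] : exists w, punctured z (z + d) E w.
  by apply: exists_punctured; rewrite ltrDl.
have wz : `|w - z| < d by rewrite gtr0_norm; lra.
have /H1 q1 : `|w - z| < d1 by apply: lt_le_trans wz _; rewrite !ge_min lexx.
have /H2 q2 : `|w - z| < d2 by apply: lt_le_trans wz _; rewrite !ge_min lexx orbT.
have /H3 q3 : `|w - z| < d3 by apply: lt_le_trans wz _; rewrite !ge_min lexx !orbT.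
have wb : w < b by apply: lt_le_trans wd _; rewrite -lerBrDl !ge_min lexx !orbT.
rewrite hornerN oppr_gt0 in q2; rewrite hornerD hornerN subr_gt0 in q3.
have Dw : punctured a b E w by rewrite /punctured /= wE wb andbT (lt_trans az zw).
have wY : w \notin Y by rewrite -root_nodal rootE gt_eqF.
have wY' : w \notin Y' by rewrite -root_nodal rootE lt_eqF.
have dd_ge0 s : size s = k -> uniq s -> all (punctured a b E) s -> w \notin s ->
    0 <= divdiff F (rcons s w).
  by move=> ks us Ds ws; apply: HF; rewrite ?size_rcons ?ks ?rcons_uniq ?ws ?all_rcons ?Dw.
have := mulr_ge0 (dd_ge0 _ kY uY DY wY) (ltW q1).
have := mulr_ge0_le0 (dd_ge0 _ kY' uY' DY' wY') (ltW q2).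
rewrite !lagrange_poly_error //; lra.
Qed.

End RealClosed.

Section Real.
Variable R : realType.
Local Open Scope classical_set_scope.
Implicit Types (f F : R -> R) (E Y Z : seq R) (a b z : R).

(* The quotient is the divided difference [Y, z] of F redefined by F z := c. The
   supremum of the L_Y(z) with nodal Y z > 0 is a suitable c, since every L_Y'(z)
   with nodal Y' z < 0 bounds them from above. *)
Lemma dd_nonneg_extension a b E F z k : (0 < k)%N -> a < z < b -> z \in E ->
  dd_nonneg k.+1 (punctured a b E) F ->
  exists c, forall Y, size Y = k -> uniq Y -> all (punctured a b E) Y ->
    0 <= (c - (lagrange_poly F Y).[z]) / (nodal Y).[z].
Proof.
move=> k0 azb zE HF; have /andP[az zb] := azb.
pose S : set R := fun v => exists Y, [/\ size Y = k, uniq Y, all (punctured a b E) Y,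
  0 < (nodal Y).[z] & v = (lagrange_poly F Y).[z]].
have [Y1 [kY1 uY1 DY1 pY1]] := exists_nodal_gt0 E k az (ltW zb).
have S0 : S !=set0 by exists (lagrange_poly F Y1).[z], Y1.
have [Y2 [kY2 uY2 DY2 nY2]] := exists_nodal_lt0 E k0 azb.
have le_lagrange := lagrange_poly_le_nodal_sign azb HF.
have ubS : ubound S (lagrange_poly F Y2).[z].
  by move=> _ [Y [kY uY DY pY ->]]; apply: le_lagrange.
exists (sup S) => Y kY uY DY.
have : (nodal Y).[z] != 0.
  by rewrite -rootE root_nodal; apply: contraTN zE => /(allP DY) /andP[].
rewrite neq_lt => /orP[nY | pY].
  apply: mulr_le0; last by rewrite invr_le0 ltW.
  rewrite subr_le0; apply: ge_sup => // _ [Y' [kY' uY' DY' pY' ->]].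
  exact: le_lagrange.
apply: divr_ge0; last exact: ltW.
rewrite subr_ge0; apply: sup_upper_bound; last by exists Y.
by split => //; exists (lagrange_poly F Y2).[z].
Qed.

(* Induction on Z: extend F at the first node z by the value c above, and recurse on
   the divided difference (F x - c) / (x - z), whose nonnegativity is one order lower. *)
Lemma exists_poly_nodal_sign a b E Z F : {subset Z <= E} -> all (fun z => a < z < b) Z ->
  dd_nonneg (size Z).+1 (punctured a b E) F ->
  exists2 r : {poly R}, (size r <= size Z)%N &
    forall x, punctured a b E x -> 0 <= (F x - r.[x]) * (nodal Z).[x].
Proof.
elim: Z F => [|z Z IH] F ZE /= Zab HF.
  exists 0 => [|x Dx]; first by rewrite size_poly0.
  rewrite horner0 subr0 /nodal big_nil hornerC mulr1.
  by have := HF [:: x] erefl erefl; rewrite /= Dx => /(_ erefl).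
have zE : z \in E by apply: ZE; rewrite mem_head.
have /andP[zab {}Zab] := Zab.
have [c Hc] := dd_nonneg_extension (ltn0Sn _) zab zE HF.
have Dz : ~~ punctured a b E z by rewrite /punctured /= zE andbF.
have ZE' : {subset Z <= E} by move=> y yZ; apply: ZE; rewrite inE yZ orbT.
have [r rZ Hr] := IH _ ZE' Zab (dd_nonneg_slope (ltn0Sn _) Dz Hc).
exists (c%:P + ('X - z%:P) * r) => [|x Dx].
  rewrite (leq_trans (size_polyD _ _)) // geq_max (leq_trans (size_polyC_leq1 _)) //=.
  by rewrite (leq_trans (size_polyMleq _ _)) // size_XsubC.
have xz : x - z != 0 by rewrite subr_eq0; apply: contraNneq Dz => <-.
move: (Hr x Dx); rewrite nodal_cons hornerD hornerC !hornerM !hornerXsubC.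
set P := (nodal Z).[x]; set q := r.[x] => Hx.
have -> : (F x - (c + (x - z) * q)) * ((x - z) * P)
    = (x - z) ^+ 2 * (((F x - c) / (x - z) - q) * P) by field.
by rewrite mulr_ge0 ?sqr_ge0.
Qed.

Theorem mconvex_le_interp a b Z f : a < b -> uniq Z -> all (fun z => a < z < b) Z ->
  mconvex_on (2 * size Z).+1 a b f ->
  exists p : {poly R}, [/\ (size p <= (2 * size Z).+2)%N,
    {in [:: a, b & Z], forall y, p.[y] = f y} &
    forall y, a <= y <= b -> f y <= p.[y]].
Proof.
move=> ab uZ Zab Hf; set N := [:: a, b & Z].
have Zab' y : y \in Z -> a < y < b by move/(allP Zab).
have uN : uniq N.
  rewrite /N /= uZ inE lt_eqF //= andbT.
  by apply/andP; split; apply/negP => /Zab' /andP[]; rewrite ltxx.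
have HF : dd_nonneg (size Z).+1 [pred y | (a <= y <= b) && (y \notin N)]
    (fun y => divdiff f (rcons N y)).
  apply: dd_nonneg_divdiff_rcons => //.
    by rewrite /= !lexx ltW //=; apply/allP => y /Zab' /andP[ay yb]; rewrite !ltW.
  by have -> : (size N + (size Z).+1 = (2 * size Z).+1 + 2)%N by rewrite /=; lia.
have [r rZ Hr] : exists2 r : {poly R}, (size r <= size Z)%N & forall x,
    punctured a b Z x -> 0 <= (divdiff f (rcons N x) - r.[x]) * (nodal Z).[x].
  apply: exists_poly_nodal_sign => //; apply: sub_dd_nonneg HF.
  move=> x /andP[/andP[ax xb] xZ] /=; rewrite !ltW //= /N !inE !negb_or xZ.
  by rewrite !neq_lt ax xb orbT.
exists (lagrange_poly f N + nodal N * r).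
have interp : {in N, forall y, (lagrange_poly f N + nodal N * r).[y] = f y}.
  move=> y yN; have /rootP Ny0 : root (nodal N) y by rewrite root_nodal.
  by rewrite hornerD hornerM Ny0 mul0r addr0 lagrange_poly_node.
split => // [|y /andP[ay yb]].
  rewrite (leq_trans (size_polyD _ _)) // geq_max (leq_trans (size_lagrange_poly _ _)) /=.
    by rewrite (leq_trans (size_polyMleq _ _)) // size_nodal /= !addSn !ltnS mul2n -addnn leq_add2l.
  by rewrite /=; lia.
have [yN | yN] := boolP (y \in N); first by rewrite interp.
have Dy : punctured a b Z y.
  move: yN; rewrite /N !inE !negb_or => /and3P[ya yb' yZ].
  by rewrite /punctured /= yZ !lt_neqAle ay yb eq_sym ya yb'.
have err := lagrange_poly_error f uN yN.
have nodalN : (nodal N).[y] = (y - a) * (y - b) * (nodal Z).[y].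
  by rewrite /N !nodal_cons !hornerM !hornerXsubC mulrA.
rewrite hornerD hornerM -subr_ge0.
have -> : (lagrange_poly f N).[y] + (nodal N).[y] * r.[y] - f y
    = (y - a) * (b - y) * ((divdiff f (rcons N y) - r.[y]) * (nodal Z).[y]).
  by rewrite -[f y](subrK (lagrange_poly f N).[y]) -err nodalN; ring.
by rewrite mulr_ge0 ?Hr // mulr_ge0 // subr_ge0.
Qed.

End Real.

Theorem corollary3 (R : realType) (n : nat) (a b : R) (f : R -> R)
  (x : 'I_n.+1 -> R) :
  (0 < n)%N -> a < b ->
  mconvex_on (2 * n).-1 a b f ->
  x ord0 = a -> x ord_max = b ->
  (forall i : 'I_n.+1, (0 < i)%N -> (i < n)%N -> a < x i < b) ->
  exists p : {poly R},
    [/\ (size p <= 2 * n)%N,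
        (forall i : 'I_n.+1, p.[x i] = f (x i)) &
        (forall y : R, a <= y <= b -> f y <= p.[y])].
Proof.
move=> n0 ab Hf x0 xn xab.
pose inner := [seq x (inord i) | i <- iota 1 n.-1].
have inner_ab : all (fun y => a < y < b) inner.
  by apply/allP => y /mapP[i]; rewrite mem_iota => /andP[i1 i2] ->; apply: xab; rewrite inordK; lia.
have inner_n : (size inner <= n.-1)%N by rewrite size_map size_iota.
have [Z [nZ uZ Zab innerZ]] := exists_uniq_cover ab inner_ab inner_n.
have nZ2 : (2 * size Z).+2 = (2 * n)%N by rewrite nZ; case: (n) n0 => // m _; rewrite mulnS.
have HfZ : mconvex_on (2 * size Z).+1 a b f by rewrite -[(2 * _).+1]/(2 * size Z).+2.-1 nZ2.
have [p [sp pN fp]] := mconvex_le_interp ab uZ Zab HfZ.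
exists p; split => // [|i]; first by rewrite -nZ2.
apply: pN; rewrite !inE.
have [i0 | i0] := posnP i.
  by rewrite (_ : i = ord0) ?x0 ?eqxx //; apply: val_inj.
have [iN | iN] := ltnP i n.
  apply/orP; right; apply/orP; right; apply: innerZ; apply/mapP; exists (val i).
    by rewrite mem_iota i0 add1n prednK.
  by congr x; apply: val_inj; rewrite /= inordK //; lia.
by rewrite (_ : i = ord_max) ?xn ?eqxx ?orbT //; apply: val_inj => /=; have := ltn_ord i; lia.
Qed.
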